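(* Let $n\geq1$ and let $G$ be any of the game-graphs $G_n(\mathbb T\ltimes\mathbb N^2)$, $G'_n(\mathbb T\rtimes\mathbb N^2)$, $G_n(\mathbb N^2\ltimes\mathbb N^2)$, $G'_n(\mathbb N^2\rtimes\mathbb N^2)$. Let $x:\partial G\to\{0,1\}$ assign a winner to each possible outcome ($0$ = Alice wins, $1$ = Bob wins). If Alice has a winning strategy given $x$, then a Toom cycle is present in $(G,x)$.
   Context: **Decision graphs.** - $\mathbb T$ is the set of finite words over $\{1,2\}$ with root $\varnothing$, edges $\mathbf i\to\mathbf ik$ ($k\in\{1,2\}$), and $|\mathbf i|$ = length. - $\mathbb N^2$ has root $(0,0)$ and edges $(i,j)\to(i,j)1:=(i+1,j)$ and $(i,j)\to(i,j)2:=(i,j+1)$, with $|(i,j)|=i+j$. **Products.** For $D^1,D^2\in\{\mathbb T,\mathbb N^2\}$: - $D^1\ltimes D^2$ has as vertices the pairs $(a,b)$ with $|a|=|b|$ (level $2|b|$) or $|a|=|b|+1$ (level $2|b|+1$), root $(0,0)$, edges $(a,b)\to(ak,b)$ from even levels and $(a,b)\to(a,bk)$ from odd levels. - $D^1\rtimes D^2$ has as vertices the pairs $(a,b)$ with $|a|=|b|$ (level $2|a|$) or $|b|=|a|+1$ (level $2|a|+1$), with edges $(a,b)\to(a,bk)$ from even levels and $(a,b)\to(ak,b)$ from odd levels. **Game-graphs.** $G_n(D)$ (resp. $G'_n(D)$) is the restriction to levels $\leq n$, with root $0$ and possible outcomes $\partial G$ = level $n$. Interior vertices at even levels are Alice's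 turn (resp. Bob's turn) and those at odd levels are Bob's (resp. Alice's). In all four cases Alice's moves change $a$ and Bob's change $b$. Alice has a winning strategy given $x$ if she has a strategy (choice of out-neighbour at each of her vertices) such that whatever Bob plays the outcome $v$ has $x(v)=0$. **Edge classes.** Let $\mathring G$ be the non-outcome vertices. Let $\vec A$ be the set of edges $((a,b),(ak,b))$ from Alice-turn vertices, and $\vec B_k$ the set of edges $((a,b),(a,bk))$ from Bob-turn vertices. **Walks and step types.** A walk is $\psi=\psi_0\cdots\psi_l$ with each $(\psi_{k-1},\psi_k)$ an edge or a reversed edge. The $k$-th step is: - su if $(\psi_{k-1},\psi_k)\in\vec A$, and sd if $(\psi_k,\psi_{k-1})\in\vec A$; - lu if $(\psi_{k-1},\psi_k)\in\vec B_2$, and ld if $(\psi_k,\psi_{k-1})\in\vec B_1$; - ru if $(\psi_{k-1},\psi_k)\in\vec B_1$, and rd if $(\psi_k,\psi_{k-1})\in\vec B_2$. Types su, lu, ru are ''up'' and sd, ld, rd are ''down''. Let - $N_\uparrow=\{0\}\cup\{0<k<l:$ steps $k,k+1$ both up$\}$, - $N_\circ=\{0<k<l:$ step $k$ down, step $k+1$ up$\}$, - $N_\downarrow=\{l\}\cup\{0<k<l:$ steps $k,k+1$ both down$\}$, - $N_\ast=\{0<k<l:$ step $k$ up, step $k+1$ down$\}$. **Toom cycle.** A Toom cycle is a walk with $l\geq2$ satisfying all of the following. - $\psi_0=\psi_l=0$; the first step is su or ru; the last step is sd or rd. - For $0<k<l$ with $\psi_k\in\mathring G$, the only allowed (step $k$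 $\to$ step $k+1$) combinations are su$\to$ru, ru$\to$su, lu$\to$su, sd$\to$rd or ld, rd$\to$sd, ld$\to$lu. - For $\psi_k\in\partial G$, the only allowed combinations are su$\to$sd, ru$\to$rd or ld, lu$\to$rd or ld. - (i) $\psi_k\neq\psi_m$ for distinct $k,m\in N_\ast$. - (ii) If $\psi_k=\psi_m$ with $k\in N_s$, $m\in N_t$, $s,t\in\{\uparrow,\circ,\downarrow\}$ and $s\leq t$ in the order $\uparrow<\circ<\downarrow$, then $k\leq m$. **Presence.** A Toom cycle is present in $(G,x)$ if $x(\psi_k)=0$ for all $k$ with $\psi_k\in\partial G$. *)

From mathcomp Require Import all_boot.
Set Implicit Arguments. Unset Strict Implicit. Unset Printing Implicit Defensive.

Inductive dir := One | Two.

Record dgraph := DGraph {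
  dvert :> Type;
  droot : dvert;
  dlen : dvert -> nat;
  dchild : dvert -> dir -> dvert }.

Definition Tree : dgraph := @DGraph (seq dir) [::] size (fun a k => rcons a k).

Definition N2 : dgraph :=
  @DGraph (nat * nat)%type (0, 0) (fun p => p.1 + p.2)
    (fun p k => match k with One => (p.1.+1, p.2) | Two => (p.1, p.2.+1) end).

Inductive prodkind := Ltimes | Rtimes.

Record gspec := GSpec {
  g1 : dgraph; g2 : dgraph; gpk : prodkind; gprimed : bool; gn : nat }.

Definition game_G (n : nat) (D1 D2 : dgraph) (pk : prodkind) := GSpec D1 D2 pk false n.
Definition game_G' (n : nat) (D1 D2 : dgraph) (pk : prodkind) := GSpec D1 D2 pk true n.

Section Game.
Variable G : gspec.

Definition gvert := (dvert (g1 G) * dvert (g2 G))%type.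

Definition groot : gvert := (droot (g1 G), droot (g2 G)).

Definition level (v : gvert) : nat := dlen v.1 + dlen v.2.

Definition in_prod (v : gvert) : Prop :=
  match gpk G with
  | Ltimes => dlen v.1 = dlen v.2 \/ dlen v.1 = (dlen v.2).+1
  | Rtimes => dlen v.1 = dlen v.2 \/ dlen v.2 = (dlen v.1).+1
  end.

Definition prod_edge (u v : gvert) : Prop :=
  in_prod u /\ in_prod v /\
  match gpk G with
  | Ltimes => (~~ odd (level u) /\ exists k, v = (dchild u.1 k, u.2))
              \/ (odd (level u) /\ exists k, v = (u.1, dchild u.2 k))
  | Rtimes => (~~ odd (level u) /\ exists k, v = (u.1, dchild u.2 k))
              \/ (odd (level u) /\ exists k, v = (dchild u.1 k, u.2))
  end.

Definition inG (v : gvert) : Prop := in_prod v /\ level v <= gn G.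
Definition edgeG (u v : gvert) : Prop := inG u /\ inG v /\ prod_edge u v.
Definition outcome (v : gvert) : Prop := inG v /\ level v = gn G.
Definition interior (v : gvert) : Prop := inG v /\ level v < gn G.

Definition alice_turn (v : gvert) : Prop := interior v /\ odd (level v) = gprimed G.
Definition bob_turn (v : gvert) : Prop := interior v /\ odd (level v) <> gprimed G.

Definition edgeA (u v : gvert) : Prop :=
  edgeG u v /\ alice_turn u /\ exists k, v = (dchild u.1 k, u.2).
Definition edgeB (k : dir) (u v : gvert) : Prop :=
  edgeG u v /\ bob_turn u /\ v = (u.1, dchild u.2 k).

(** Strategies for Alice and winning. x v = false means Alice wins (x = 0),
    x v = true means Bob wins (x = 1). *)
Definition alice_strategy (sigma : gvert -> gvert) : Prop :=
  forall u, alice_turn u -> edgeG u (sigma u).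

Inductive reach (sigma : gvert -> gvert) : gvert -> Prop :=
  | reach_root : reach sigma groot
  | reach_alice u : reach sigma u -> alice_turn u -> reach sigma (sigma u)
  | reach_bob u v : reach sigma u -> bob_turn u -> edgeG u v -> reach sigma v.

Definition alice_wins (x : gvert -> bool) : Prop :=
  exists sigma, alice_strategy sigma /\
    forall v, reach sigma v -> outcome v -> x v = false.

Inductive stype := su | sd | lu | ld | ru | rd.

Definition is_up (t : stype) : bool :=
  match t with su | lu | ru => true | _ => false end.

Definition step_of (u v : gvert) (t : stype) : Prop :=
  match t with
  | su => edgeA u v
  | sd => edgeA v u
  | lu => edgeB Two u v
  | ld => edgeB One v u
  | ru => edgeB One u v
  | rd => edgeB Two v u
  end.

Definition allowed_int (t1 t2 : stype) : bool :=
  match t1, t2 with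
  | su, ru | ru, su | lu, su | sd, rd | sd, ld | rd, sd | ld, lu => true
  | _, _ => false
  end.

Definition allowed_bd (t1 t2 : stype) : bool :=
  match t1, t2 with
  | su, sd | ru, rd | ru, ld | lu, rd | lu, ld => true
  | _, _ => false
  end.

(** N_up (r = 0), N_circ (r = 1), N_down (r = 2); order up < circ < down. *)
Definition Nclass (tau : nat -> stype) (l r k : nat) : Prop :=
  match r with
  | 0 => k = 0 \/ (0 < k < l /\ is_up (tau k) /\ is_up (tau k.+1))
  | 1 => 0 < k < l /\ ~~ is_up (tau k) /\ is_up (tau k.+1)
  | 2 => k = l \/ (0 < k < l /\ ~~ is_up (tau k) /\ ~~ is_up (tau k.+1))
  | _ => False
  end.

Definition Nast (tau : nat -> stype) (l k : nat) : Prop :=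
  0 < k < l /\ is_up (tau k) /\ ~~ is_up (tau k.+1).

Definition toom_cycle (l : nat) (psi : nat -> gvert) : Prop :=
  2 <= l /\
  (forall k, 0 < k <= l -> edgeG (psi k.-1) (psi k) \/ edgeG (psi k) (psi k.-1)) /\
  exists tau : nat -> stype,
    (forall k, 0 < k <= l -> step_of (psi k.-1) (psi k) (tau k)) /\
    psi 0 = groot /\ psi l = groot /\
    (tau 1 = su \/ tau 1 = ru) /\ (tau l = sd \/ tau l = rd) /\
    (forall k, 0 < k < l -> interior (psi k) -> allowed_int (tau k) (tau k.+1)) /\
    (forall k, 0 < k < l -> outcome (psi k) -> allowed_bd (tau k) (tau k.+1)) /\
    (forall k m, Nast tau l k -> Nast tau l m -> k <> m -> psi k <> psi m) /\
    (forall k m s t, s <= t -> Nclass tau l s k -> Nclass tau l t m ->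
       psi k = psi m -> k <= m).

Definition toom_present (x : gvert -> bool) : Prop :=
  exists l psi, toom_cycle l psi /\
    forall k, k <= l -> outcome (psi k) -> x (psi k) = false.

End Game.

(* If Alice wins G_{n+1} for x, she wins G_n for the payoff
   x' that lets her win at a vertex of level n iff she wins the last move from
   there; so G_n contains a Toom cycle present for x', whose visits at level n
   are peaks with x' = 0. Each peak visit is replaced by a detour through level
   n+1: up to a child with x = 0 (any child at Bob's vertices) and down again,
   either back to the peak or to a later peak below the same child, skipping the
   visits in between; at Bob's peaks the detour may zigzag through several
   peaks. In T and N^2 a vertex has at most one parent in each direction, which
   is what makes every level-(n+1) vertex visited only once and yields the
   ordering conditions of the new Toom cycle. *)

From mathcomp Require Import all_boot zify.
From Stdlib Require Import Classical.
From Stdlib Require List.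
Import List (In, ForallOrdPairs, Forall_forall, in_app_iff, in_split).
Set Implicit Arguments. Unset Strict Implicit. Unset Printing Implicit Defensive.

Lemma In_nth (A : Type) (s : seq A) d i : i < size s -> In (nth d s i) s.
Proof. by elim: s i => [|a s IH] [|i] //= Hi; [left | right; apply: IH]. Qed.

Lemma In_cat (A : Type) (a : A) s1 s2 : In a (s1 ++ s2) <-> In a s1 \/ In a s2.
Proof. exact: in_app_iff. Qed.

Section Pairwise.
Variables (A : Type) (R : A -> A -> Prop).

Lemma ForallOrdPairs_consE a s :
  ForallOrdPairs R (a :: s) <-> (forall b, In b s -> R a b) /\ ForallOrdPairs R s.
Proof.
split => [H|[Ha Hs]]; last by constructor => //; apply/Forall_forall.
by inversion_clear H; split => //; apply/Forall_forall.
Qed.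

Lemma ForallOrdPairs_cat s1 s2 :
  ForallOrdPairs R s1 -> ForallOrdPairs R s2 ->
  (forall a b, In a s1 -> In b s2 -> R a b) -> ForallOrdPairs R (s1 ++ s2).
Proof.
elim: s1 => [|a s1 IH] //= /ForallOrdPairs_consE[Ha H1] H2 H12.
apply/ForallOrdPairs_consE; split; last by apply: IH => // ? ? ?; apply: H12; right.
move=> b /In_cat[Hb|Hb]; [exact: Ha | by apply: H12 => //; left].
Qed.

Lemma ForallOrdPairs_mid s1 a s2 : ForallOrdPairs R (s1 ++ a :: s2) ->
  (forall b, In b s1 -> R b a) /\ (forall b, In b s2 -> R a b).
Proof.
elim: s1 => [|c s1 IH] /= /ForallOrdPairs_consE[Hc H]; first by [].
have [H1 H2] := IH H; split => // b [<-|]; last exact: H1.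
by apply: Hc; apply/In_cat; right; left.
Qed.

Lemma ForallOrdPairs_nth s d i j :
  ForallOrdPairs R s -> i < j < size s -> R (nth d s i) (nth d s j).
Proof.
elim: s i j => [|a s IH] i j H /andP[Hij Hj] //.
case/ForallOrdPairs_consE: H => Ha H; case: i j Hij Hj => [|i] [|j] //= Hij Hj.
- by apply: Ha; apply: In_nth.
- by apply: IH => //; rewrite -ltnS Hij.
Qed.

End Pairwise.

Inductive chain (A : Type) (R : A -> A -> Prop) : A -> seq A -> Prop :=
| chain_nil a : chain R a [::]
| chain_cons a b s : R a b -> chain R b s -> chain R a (b :: s).

Section Chain.
Variables (A : Type) (R : A -> A -> Prop).

Lemma chain_cons_inv a b s : chain R a (b :: s) -> R a b /\ chain R b s.
Proof. by move=> C; inversion_clear C. Qed.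

Lemma chain_cat a s1 s2 :
  chain R a (s1 ++ s2) <-> chain R a s1 /\ chain R (last a s1) s2.
Proof.
elim: s1 a => [|b s1 IH] a /=; first by split => [|[]] //; split => //; constructor.
split=> [H|[H1 H2]].
- inversion_clear H as [|? ? ? Hab Hs].
  by have [] := (IH b).1 Hs; split => //; constructor.
- by inversion_clear H1; constructor => //; apply/IH.
Qed.

Lemma chain_nth a s d i :
  chain R a s -> i < size s -> R (nth d (a :: s) i) (nth d (a :: s) i.+1).
Proof.
elim: s a i => [|b s IH] a i //= H; inversion_clear H.
by case: i => [|i] //= Hi; apply: IH.
Qed.

Lemma chain_pred a s b : chain R a s -> In b s -> exists c, R c b.
Proof.
elim: s a => [|c s IH] a //= H; inversion_clear H as [|? ? ? Hac Hs].
by case=> [<-|Hb]; [exists a | exact: IH Hs Hb].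
Qed.

Lemma chain_succ a s b : chain R a s -> In b s -> b <> last a s -> exists c, R b c.
Proof.
elim: s a => [|c s IH] a //= H; inversion_clear H as [|? ? ? Hac Hs].
case=> [<-|Hb]; last exact: IH Hs Hb.
by case: s Hs {IH} => [|d s] //= Hs _; inversion_clear Hs; exists d.
Qed.

Lemma chain_rehead a a' s :
  (forall b, R a b -> R a' b) -> chain R a s -> chain R a' s.
Proof. by move=> H C; inversion_clear C; constructor; auto. Qed.

End Chain.

Section LatticeProduct.
Variable D : dgraph.
Hypothesis dlen_child : forall a k, @dlen D (dchild a k) = (dlen a).+1.
Hypothesis dchild_inj : forall a a' k, @dchild D a k = dchild a' k -> a = a'.
Hypothesis dlen_root : @dlen D (droot D) = 0.
Variables (pk : prodkind) (primed : bool).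
(* In both products Alice's turns are exactly the vertices where the product
   moves in [D]. *)
Hypothesis alice_moves_D : (pk = Ltimes /\ primed = false) \/ (pk = Rtimes /\ primed = true).

Definition G n := GSpec D N2 pk primed n.
Definition vertex := (dvert D * (nat * nat))%type.
Definition lenB (v : vertex) := v.2.1 + v.2.2.
Definition lev (v : vertex) := dlen v.1 + lenB v.
Definition moveA (v : vertex) k : vertex := (dchild v.1 k, v.2).
Definition moveB (v : vertex) k : vertex := (v.1, @dchild N2 v.2 k).
Definition alice_at (v : vertex) := odd (lev v) == primed.
Definition in_product (v : vertex) : Prop :=
  match pk with
  | Ltimes => dlen v.1 = lenB v \/ dlen v.1 = (lenB v).+1
  | Rtimes => dlen v.1 = lenB v \/ lenB v = (dlen v.1).+1
  end.
Definition origin : vertex := (droot D, (0, 0)).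

Lemma lenB_moveB v k : lenB (moveB v k) = (lenB v).+1.
Proof. by case: k; rewrite /lenB /= ?addSn ?addnS. Qed.

Lemma lev_moveA v k : lev (moveA v k) = (lev v).+1.
Proof. by rewrite /lev /= dlen_child. Qed.

Lemma lev_moveB v k : lev (moveB v k) = (lev v).+1.
Proof. by rewrite /lev lenB_moveB addnS. Qed.

Lemma lev_origin : lev origin = 0.
Proof. by rewrite /lev /= dlen_root. Qed.

Lemma alice_at_succ v w : lev w = (lev v).+1 -> alice_at w = ~~ alice_at v.
Proof. by rewrite /alice_at => -> /=; case: (odd (lev v)); case: primed. Qed.

Lemma alice_at_lev v w : lev v = lev w -> alice_at v = alice_at w.
Proof. by rewrite /alice_at => ->. Qed.

Lemma in_product_origin : in_product origin.
Proof. by rewrite /in_product /= dlen_root; case: pk; left. Qed.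

Lemma in_product_moveA v k : in_product v -> alice_at v -> in_product (moveA v k).
Proof.
rewrite /in_product /alice_at /lev -[lenB (moveA v k)]/(lenB v) /= dlen_child.
by case: alice_moves_D => -[-> ->] [] -> /=;
  rewrite ?addSn ?addnS /= addnn odd_double //; [right|left].
Qed.

Lemma in_product_moveB v k : in_product v -> ~~ alice_at v -> in_product (moveB v k).
Proof.
rewrite /in_product /alice_at /lev lenB_moveB.
by case: alice_moves_D => -[-> ->] [] -> /=;
  rewrite ?addSn ?addnS /= addnn odd_double //; [left|right].
Qed.

Lemma moveA_inj u u' k : moveA u k = moveA u' k -> u = u'.
Proof. by case: u u' => [a b] [a' b'] [/dchild_inj -> ->]. Qed.

Lemma moveB_inj u u' k : moveB u k = moveB u' k -> u = u'.
Proof. by case: u u' => [a [i j]] [a' [i' j']]; case: k => /= -[-> -> ->]. Qed.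

Lemma moveB_One_Two u : moveB u One <> moveB u Two.
Proof. by case: u => [a [i j]] [] /eqP; rewrite eqn_leq ltnn. Qed.

Definition moveA_edge n (u v : vertex) : Prop :=
  in_product u /\ lev u < n /\ alice_at u /\ exists k, v = moveA u k.
Definition moveB_edge n k (u v : vertex) : Prop :=
  in_product u /\ lev u < n /\ ~~ alice_at u /\ v = moveB u k.

Definition step n (u v : vertex) (t : stype) : Prop :=
  match t with
  | su => moveA_edge n u v | sd => moveA_edge n v u
  | lu => moveB_edge n Two u v | ld => moveB_edge n One v u
  | ru => moveB_edge n One u v | rd => moveB_edge n Two v u
  end.

Lemma moveA_edge_intro n u k :
  in_product u -> lev u < n -> alice_at u -> moveA_edge n u (moveA u k).
Proof. by do !split => //; exists k. Qed.

Definition move_to (u v : vertex) : Prop :=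
  (alice_at u /\ exists k, v = moveA u k) \/ (~~ alice_at u /\ exists k, v = moveB u k).

Lemma lev_move_to u v : move_to u v -> lev v = (lev u).+1.
Proof. by case=> -[_ [k ->]]; rewrite ?lev_moveA ?lev_moveB. Qed.

Lemma in_product_move_to u v : in_product u -> move_to u v -> in_product v.
Proof.
by move=> Hu [[Au [k ->]] | [Bu [k ->]]]; [exact: in_product_moveA | exact: in_product_moveB].
Qed.

Lemma inGE n v : @inG (G n) v <-> in_product v /\ lev v <= n.
Proof. by []. Qed.

Lemma prod_edgeE n u v :
  @prod_edge (G n) u v <-> in_product u /\ in_product v /\ move_to u v.
Proof.
rewrite /prod_edge /move_to /= -/(lev u) -/(in_product u) -/(in_product v) /alice_at.
by case: alice_moves_D => -[-> ->] /=; case: (odd (lev u)); intuition.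
Qed.

Lemma edgeGE n u v :
  @edgeG (G n) u v <-> in_product u /\ lev u < n /\ move_to u v.
Proof.
rewrite /edgeG !inGE prod_edgeE; split.
- by move=> [[Hu _] [[_ Hv] [_ [_ H]]]]; do !split => //; rewrite -(lev_move_to H).
- move=> [Hu [Hn H]]; do !split => //; try exact: in_product_move_to H.
  + exact: ltnW.
  + by rewrite (lev_move_to H).
Qed.

Lemma interiorE n v : @interior (G n) v <-> in_product v /\ lev v < n.
Proof. by rewrite /interior inGE; split => [[[? ?] ?] | [? ?]]; do !split => //; exact: ltnW. Qed.

Lemma outcomeE n v : @outcome (G n) v <-> in_product v /\ lev v = n.
Proof. by rewrite /outcome inGE; split => [[[? ?] ?] | [? E]]; do !split => //; rewrite E. Qed.

Lemma alice_turnE n u : @alice_turn (G n) u <-> in_product u /\ lev u < n /\ alice_at u.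
Proof.
rewrite /alice_turn interiorE /alice_at.
by split => [[[? ?] /eqP ?] | [? [? /eqP ?]]].
Qed.

Lemma bob_turnE n u : @bob_turn (G n) u <-> in_product u /\ lev u < n /\ ~~ alice_at u.
Proof.
rewrite /bob_turn interiorE /alice_at.
by split => [[[? ?] /eqP ?] | [? [? /eqP ?]]].
Qed.

Lemma edgeAE n u v : @edgeA (G n) u v <-> moveA_edge n u v.
Proof.
rewrite /edgeA /moveA_edge edgeGE alice_turnE.
by split => [[_ [[? [? ?]] ?]] | [? [? [? ?]]]]; do !split => //; left.
Qed.

Lemma edgeBE n k u v : @edgeB (G n) k u v <-> moveB_edge n k u v.
Proof.
rewrite /edgeB /moveB_edge edgeGE bob_turnE.
by split => [[_ [[? [? ?]] ?]] | [? [? [? ?]]]]; do !split => //; right; split => //; exists k.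
Qed.

Lemma step_ofE n u v t : @step_of (G n) u v t <-> step n u v t.
Proof. by case: t => /=; rewrite ?edgeAE ?edgeBE. Qed.

Lemma edgeG_succ n u v : @edgeG (G n) u v ->
  in_product v /\ lev v = (lev u).+1 /\ lev u < n.
Proof.
by move/edgeGE=> [Hu [Hn H]]; rewrite (lev_move_to H); split => //; exact: in_product_move_to H.
Qed.

Fixpoint alice_forces (x : vertex -> bool) (d : nat) (v : vertex) : Prop :=
  match d with
  | 0 => x v = false
  | d'.+1 => if alice_at v then exists k, alice_forces x d' (moveA v k)
             else forall k, alice_forces x d' (moveB v k)
  end.

Definition alice_forces1 (x : vertex -> bool) (v : vertex) : bool :=
  if alice_at v then ~~ x (moveA v One) || ~~ x (moveA v Two)
  else ~~ x (moveB v One) && ~~ x (moveB v Two).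

Definition payoff1 (x : vertex -> bool) (v : vertex) : bool := ~~ alice_forces1 x v.

Lemma alice_forces1P x v : alice_forces x 1 v <-> alice_forces1 x v.
Proof.
rewrite /= /alice_forces1; case: (alice_at v); split.
- by case=> -[] ->; rewrite ?orbT.
- by case/orP => /negPf H; eexists; exact: H.
- by move=> H; rewrite (H One) (H Two).
- by case/andP => /negPf h1 /negPf h2 -[].
Qed.

Lemma alice_forcesS x d v : alice_forces x d.+1 v <-> alice_forces (payoff1 x) d v.
Proof.
elim: d v => [|d IH] v; first by rewrite alice_forces1P /= /payoff1; case: alice_forces1.
have unfold1 y d' : alice_forces y d'.+1 v = if alice_at v
    then exists k, alice_forces y d' (moveA v k) else forall k, alice_forces y d' (moveB v k).
  by [].
rewrite (unfold1 x d.+1) (unfold1 _ d).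
case: (alice_at v); split.
- by case=> k /IH Hk; exists k.
- by case=> k Hk; exists k; apply/IH.
- by move=> H k; apply/IH.
- by move=> H k; apply/IH.
Qed.

Lemma reach_lev n (sigma : vertex -> vertex) v : @alice_strategy (G n) sigma ->
  @reach (G n) sigma v -> in_product v /\ lev v <= n.
Proof.
move=> Hs; elim=> [|u _ _ Ha|u w _ _ _ /edgeG_succ[Hw [-> Hn]]] //.
- by rewrite lev_origin; split => //; exact: in_product_origin.
- by have [Hw [-> Hn]] := edgeG_succ (Hs u Ha).
Qed.

Lemma alice_wins_forces n x : @alice_wins (G n) x -> alice_forces x n origin.
Proof.
move=> [sigma [Hs Hw]].
suff H d v : @reach (G n) sigma v -> lev v + d = n -> alice_forces x d v.
  by apply: H; [constructor | rewrite lev_origin].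
elim: d v => [|d IH] v Hr Hl; have [Hv _] := reach_lev Hs Hr.
  by apply: Hw => //; apply/outcomeE; rewrite -Hl addn0.
have Hlt : lev v < n by rewrite -Hl addnS ltnS leq_addr.
rewrite /=; case Av: (alice_at v).
- have Ha : @alice_turn (G n) v by apply/alice_turnE; rewrite Av.
  have /edgeGE[_ [_ [[_ [k Ek]] | [] ]]] := Hs v Ha; last by rewrite Av.
  exists k; apply: IH; first by rewrite -Ek; exact: reach_alice.
  by rewrite lev_moveA -Hl addSnnS.
- move=> k; have Hb : @bob_turn (G n) v by apply/bob_turnE; rewrite Av.
  apply: IH; last by rewrite lev_moveB -Hl addSnnS.
  apply: reach_bob Hb _ => //; apply/edgeGE; do !split => //.
  by right; rewrite Av; split => //; exists k.
Qed.

Lemma step_lev n u v t : step n u v t ->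
  if is_up t then lev u < n /\ lev v = (lev u).+1 else lev v < n /\ lev u = (lev v).+1.
Proof.
by case: t => /= -[_ [Hn [_ E]]]; split => //;
  [case: E => k -> | case: E => k -> | rewrite E | rewrite E | rewrite E | rewrite E];
  rewrite ?lev_moveA ?lev_moveB.
Qed.

Lemma step_mono n u v t : step n u v t -> step n.+1 u v t.
Proof. by case: t => -[? [Hn ?]]; do !split => //; exact: ltnW. Qed.

Lemma step_edgeG n u v t : step n u v t -> @edgeG (G n) u v \/ @edgeG (G n) v u.
Proof. by move/step_ofE; case: t => -[]; [left | right | left | right | left | right]. Qed.

(* Vertices of [D] have no decidable equality, so walks are lists of visits
   compared with the propositional membership [In]. A visit records the types
   of the steps entering and leaving its vertex ([None] at the two ends). *)
Definition node := (option stype * vertex * option stype)%type.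
Definition nin (a : node) := a.1.1.
Definition vtx (a : node) := a.1.2.
Definition nout (a : node) := a.2.
Arguments nin !a /.
Arguments vtx !a /.
Arguments nout !a /.

Definition link n (a b : node) : Prop :=
  exists t, nout a = Some t /\ nin b = Some t /\ step n (vtx a) (vtx b) t.

(* 0, 1, 2, 3 stand for N_up, N_circ, N_down, N_ast. *)
Definition node_class (a : node) : nat :=
  match nin a, nout a with
  | None, _ => 0
  | Some _, None => 2
  | Some s, Some t =>
      if is_up s then (if is_up t then 0 else 3) else (if is_up t then 1 else 2)
  end.

(* The admissible classes of an earlier and a later visit of the same vertex. *)
Definition class_precedes (c1 c2 : nat) : bool :=
  if c1 == 3 then c2 != 3 else (c2 == 3) || (c1 < c2).

Definition visits_ordered (a b : node) : Prop :=
  vtx a = vtx b -> class_precedes (node_class a) (node_class b).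

Definition turn_ok n (a : node) : Prop :=
  match nin a, nout a with
  | Some s, Some t =>
      (lev (vtx a) < n -> allowed_int s t) /\ (lev (vtx a) = n -> allowed_bd s t)
  | _, _ => True
  end.

Definition node_ok n (x : vertex -> bool) (a : node) : Prop :=
  turn_ok n a /\ in_product (vtx a) /\ lev (vtx a) <= n /\
  (lev (vtx a) = n -> x (vtx a) = false).

Definition start t : node := (None, origin, Some t).

(* A Toom cycle of [G n] present for [x], in the visit encoding. *)
Record toom_walk n (x : vertex -> bool) (t0 : stype) (W : seq node) : Prop := {
  walk_first : t0 = su \/ t0 = ru;
  walk_chain : chain (link n) (start t0) W;
  walk_last : exists2 t, last (start t0) W = (Some t, origin, None) & t = sd \/ t = rd;
  walk_nodes : forall a, In a (start t0 :: W) -> node_ok n x a;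
  walk_ordered : ForallOrdPairs visits_ordered (start t0 :: W) }.

Lemma visits_ordered_lev a b : lev (vtx a) <> lev (vtx b) -> visits_ordered a b.
Proof. by move=> H E; case: H; rewrite E. Qed.

Lemma class_precedes_down s t : s <= t -> t <= 2 -> ~~ class_precedes t s.
Proof. by case: t => [|[|[|]]] //; case: s => [|[|[|]]]. Qed.

Lemma Nclass_bound (tau : nat -> stype) l r k : Nclass tau l r k -> k <= l.
Proof.
case: r => [|[|[|r]]] //=.
- by case=> [->|[/andP[_ /ltnW]]].
- by case=> /andP[_ /ltnW].
- by case=> [->|[/andP[_ /ltnW]]].
Qed.

Section WalkToCycle.
Variables (n : nat) (t0 : stype) (W : seq node).
Hypothesis walk : chain (link n) (start t0) W.

Definition wnode k := nth (start t0) (start t0 :: W) k.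
Definition wpsi k := vtx (wnode k).
Definition wtau k := odflt su (nin (wnode k)).

Lemma wnode_link k : 0 < k <= size W -> link n (wnode k.-1) (wnode k).
Proof. by case: k => [|k] // /andP[_ Hk]; exact: chain_nth walk Hk. Qed.

Lemma wnode_nin k : 0 < k <= size W -> nin (wnode k) = Some (wtau k).
Proof. by move/wnode_link=> [t [_ [E _]]]; rewrite /wtau E. Qed.

Lemma wnode_nout k : k < size W -> nout (wnode k) = Some (wtau k.+1).
Proof. by move/(@wnode_link k.+1)=> [t [E1 [E2 _]]]; rewrite /wtau E2 E1. Qed.

Lemma wnode_step k : 0 < k <= size W -> step n (wpsi k.-1) (wpsi k) (wtau k).
Proof. by move=> Hk; have [t [_ [E S]]] := wnode_link Hk; rewrite /wtau E. Qed.

Lemma wnode_inner k : 0 < k < size W ->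
  wnode k = (Some (wtau k), wpsi k, Some (wtau k.+1)).
Proof.
move=> /andP[Hk0 Hk]; have Hk' : 0 < k <= size W by rewrite Hk0 ltnW.
by rewrite /wpsi -wnode_nin // -wnode_nout //; case: (wnode k) => [[]].
Qed.

Variables (tl : stype) (vl : vertex).
Hypothesis walk_end : last (start t0) W = (Some tl, vl, None).

Lemma wnode_last : wnode (size W) = (Some tl, vl, None).
Proof. by rewrite -walk_end; have /= <- := nth_last (start t0) (start t0 :: W). Qed.

Lemma Nclass_node_class r k : Nclass wtau (size W) r k ->
  r <= 2 /\ node_class (wnode k) = r.
Proof.
case: r => [|[|[|r]]] //=.
- case=> [->|[Hk [H1 H2]]] //.
  by rewrite wnode_inner // /node_class /= H1 H2.
- move=> [Hk [H1 H2]]; rewrite wnode_inner // /node_class /= H2.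
  by case: is_up H1.
- case=> [->|[Hk [H1 H2]]]; first by rewrite wnode_last.
  rewrite wnode_inner // /node_class /=.
  by case: is_up H1; case: is_up H2.
Qed.

Lemma Nast_node_class k : Nast wtau (size W) k -> node_class (wnode k) = 3.
Proof.
move=> [Hk [H1 H2]]; rewrite wnode_inner // /node_class /= H1.
by case: is_up H2.
Qed.

Hypothesis walk_ordered : ForallOrdPairs visits_ordered (start t0 :: W).

Lemma wnode_precedes i j : i < j <= size W -> wpsi i = wpsi j ->
  class_precedes (node_class (wnode i)) (node_class (wnode j)).
Proof. by move=> Hij; apply: (ForallOrdPairs_nth _ walk_ordered). Qed.

Lemma Nast_injective k m : Nast wtau (size W) k -> Nast wtau (size W) m ->
  k <> m -> wpsi k <> wpsi m.
Proof.
have ast_ast i j : i < j -> Nast wtau (size W) i -> Nast wtau (size W) j -> wpsi i <> wpsi j.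
  move=> Hij Hi Hj E; have [/andP[_ /ltnW Hjl] _] := Hj.
  by have := @wnode_precedes i j; rewrite Hij Hjl !Nast_node_class // => /(_ isT E).
move=> Hk Hm Hkm E; case: (ltngtP k m) => [H|H|H] //.
- exact: ast_ast H Hk Hm E.
- exact: ast_ast H Hm Hk (esym E).
Qed.

Lemma Nclass_monotone k m s t : s <= t ->
  Nclass wtau (size W) s k -> Nclass wtau (size W) t m -> wpsi k = wpsi m -> k <= m.
Proof.
move=> Hst Hk Hm E; rewrite leqNgt; apply/negP => Hmk.
have [Hs Ecs] := Nclass_node_class Hk; have [Ht Ect] := Nclass_node_class Hm.
have := @wnode_precedes m k; rewrite Hmk (Nclass_bound Hk) => /(_ isT (esym E)).
by rewrite Ect Ecs; apply/negP/class_precedes_down.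
Qed.

End WalkToCycle.

Lemma toom_walk_present n x t0 W : toom_walk n x t0 W -> @toom_present (G n) x.
Proof.
case=> Ht0 Hch [tl Hlast Htl] Hok Hord; set l := size W.
have Hl : wnode t0 W l = (Some tl, origin, None) := wnode_last Hlast.
have Hnode k : k <= l -> node_ok n x (wnode t0 W k) by move=> Hk; apply/Hok/In_nth.
have Hl0 : 0 < l by case: W @l Hlast {Hch Hok Hord Hl Hnode}.
have Htau1 : wtau t0 W 1 = t0.
  have [t [E1 [E2 _]]] := wnode_link Hch (Hl0 : 0 < 1 <= l).
  by rewrite /wtau E2; case: E1.
have Htaul : wtau t0 W l = tl by rewrite /wtau Hl.
have Hl1 : 1 < l.
  rewrite ltn_neqAle Hl0 andbT; apply/eqP => E.
  have : is_up t0 = is_up tl by rewrite -Htau1 -Htaul -E.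
  by case: Ht0 => ->; case: Htl => ->.
exists l, (wpsi t0 W); split; last first.
  by move=> k Hk /outcomeE[_ E]; have [_ [_ [_ ]]] := Hnode k Hk; apply.
split => //; split.
  by move=> k Hk; apply: step_edgeG (wnode_step Hch Hk).
exists (wtau t0 W); do !split.
- by move=> k Hk; apply/step_ofE; exact: wnode_step.
- by rewrite /wpsi Hl.
- by rewrite Htau1.
- by rewrite Htaul.
- move=> k /andP[Hk0 Hk] /interiorE[_ Hlt].
  have [+ _] := Hnode k (ltnW Hk); rewrite (wnode_inner Hch) ?Hk0 // /turn_ok /=.
  by move=> [+ _]; apply.
- move=> k /andP[Hk0 Hk] /outcomeE[_ Heq].
  have [+ _] := Hnode k (ltnW Hk); rewrite (wnode_inner Hch) ?Hk0 // /turn_ok /=.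
  by move=> [_ +]; apply.
- exact: (Nast_injective Hch Hord).
- exact: (Nclass_monotone Hch Hlast Hord).
Qed.

Definition visited (r : seq node) (u : vertex) : Prop := exists2 a, In a r & vtx a = u.

Lemma visited_cat r1 r2 u : visited (r1 ++ r2) u <-> visited r1 u \/ visited r2 u.
Proof.
split => [[a /In_cat[] Ha <-] | [[a Ha <-] | [a Ha <-]]].
- by left; exists a.
- by right; exists a.
- by exists a => //; apply/In_cat; left.
- by exists a => //; apply/In_cat; right.
Qed.

Lemma visited_cons a r u : visited (a :: r) u <-> vtx a = u \/ visited r u.
Proof.
split => [[b [<- | Hb] <-] | [<- | [b Hb <-]]].
- by left.
- by right; exists b.
- by exists a => //; left.
- by exists b => //; right.
Qed.

Lemma node_ok_top n x s t c : lev c = n -> allowed_bd s t -> in_product c ->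
  x c = false -> node_ok n x (Some s, c, Some t).
Proof. by move=> Lc; rewrite /node_ok /turn_ok /= Lc ltnn. Qed.

Lemma node_ok_below n x a : lev (vtx a) < n -> in_product (vtx a) ->
  (if (nin a, nout a) is (Some s, Some t) then allowed_int s t else true) -> node_ok n x a.
Proof.
move=> La Ha Hst; have Nn : lev (vtx a) <> n by move=> E; rewrite E ltnn in La.
split; last by do !split => //; exact: ltnW.
by rewrite /turn_ok; case: (nin a) Hst => [s|] //; case: (nout a) => [t|] // Hst.
Qed.

Lemma node_ok_start n x t : 0 < n -> node_ok n x (start t).
Proof.
move=> n_gt0; rewrite /node_ok /= lev_origin; do !split => //; first exact: in_product_origin.
by move=> E; rewrite -E in n_gt0.
Qed.

Lemma toom_walk_base x : alice_forces x 1 origin -> exists t0 W, toom_walk 1 x t0 W.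
Proof.
have L0 := lev_origin; have P0 := in_product_origin.
rewrite /=; case A: (alice_at origin).
- move=> [k xk]; set c := moveA origin k.
  have Lc : lev c = 1 by rewrite lev_moveA L0.
  have E : moveA_edge 1 origin c by apply: moveA_edge_intro; rewrite ?L0 ?A.
  exists su, [:: (Some su, c, Some sd); (Some sd, origin, None)]; split.
  + by left.
  + by do !apply: chain_cons; [exists su | exists sd | constructor].
  + by exists sd => //; left.
  + move=> a [<- | [<- | [<- | []]]]; first exact: node_ok_start.
    * by apply: node_ok_top => //; exact: in_product_moveA.
    * by apply: node_ok_below; rewrite ?L0.
  + have Hc : lev c <> lev origin by rewrite Lc L0.
    by repeat constructor; try done; apply: visits_ordered_lev.
- move=> Hk; set c1 := moveB origin One; set c2 := moveB origin Two.
  have L1 : lev c1 = 1 by rewrite lev_moveB L0.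
  have L2 : lev c2 = 1 by rewrite lev_moveB L0.
  have E1 : moveB_edge 1 One origin c1 by do !split; rewrite ?L0 ?A.
  have E2 : moveB_edge 1 Two origin c2 by do !split; rewrite ?L0 ?A.
  exists ru, [:: (Some ru, c1, Some ld); (Some ld, origin, Some lu);
                (Some lu, c2, Some rd); (Some rd, origin, None)]; split.
  + by right.
  + by do !apply: chain_cons; [exists ru | exists ld | exists lu | exists rd | constructor].
  + by exists rd => //; right.
  + have P k : in_product (moveB origin k) by apply: in_product_moveB; rewrite ?A.
    move=> a [<- | [<- | [<- | [<- | [<- | []]]]]]; first exact: node_ok_start.
    * by apply: node_ok_top; [exact: L1 | | exact: P | exact: Hk].
    * by apply: node_ok_below; rewrite ?L0.
    * by apply: node_ok_top; [exact: L2 | | exact: P | exact: Hk].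
    * by apply: node_ok_below; rewrite ?L0.
  + have H1 : lev c1 <> lev origin by rewrite L1 L0.
    have H2 : lev c2 <> lev origin by rewrite L2 L0.
    by repeat constructor; try done; apply: visits_ordered_lev.
Qed.

Lemma allowed_bd_updown s t : allowed_bd s t -> is_up s /\ ~~ is_up t.
Proof. by case: s; case: t. Qed.

Lemma step_in_product n u v t : step n u v t -> in_product u /\ in_product v.
Proof. by move/step_edgeG=> [] [[Hu _] [[Hv _] _]]. Qed.

Lemma step_up_move_to n u v t : step n u v t -> is_up t -> move_to u v.
Proof.
case: t => // -[_ [_ [Au E]]] _.
- by left; split.
- by right; split => //; exists Two.
- by right; split => //; exists One.
Qed.

Lemma In_suffix (A : Type) (a b e : A) r pre cont :
  a :: r = pre ++ e :: cont -> In b cont -> In b r.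
Proof.
case: pre => [|c pre] [_ ->] // Hb.
by apply/In_cat; right; right.
Qed.

Lemma visited_suffix a e r pre cont u :
  a :: r = pre ++ e :: cont -> visited cont u -> visited r u.
Proof. by move=> E [b Hb <-]; exists b => //; exact: In_suffix E Hb. Qed.

Lemma last_default (A : Type) (a b : A) s : s <> [::] -> last a s = last b s.
Proof. by case: s. Qed.

Section Lift.
Variable n : nat.
Hypothesis n_gt0 : 0 < n.
Variable x : vertex -> bool.

Definition peak_shape (a : node) : Prop :=
  exists s t, nin a = Some s /\ nout a = Some t /\
    if alice_at (vtx a) then (s = ru \/ s = lu) /\ (t = rd \/ t = ld) else s = su /\ t = sd.

Lemma peak_shape_class a : peak_shape a -> node_class a = 3.
Proof.
move=> [s [t [Es [Et H]]]]; rewrite /node_class Es Et.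
by case: alice_at H => [[[->|->] [->|->]] | [-> ->]].
Qed.

Lemma peak_shape_updown a : peak_shape a ->
  exists s t, nin a = Some s /\ nout a = Some t /\ is_up s /\ ~~ is_up t.
Proof.
move=> [s [t [Es [Et H]]]]; exists s, t; do 2!split => //; apply/andP.
by case: alice_at H => [[[->|->] [->|->]] | [-> ->]].
Qed.

Lemma bob_peak_shape a : peak_shape a -> ~~ alice_at (vtx a) ->
  nin a = Some su /\ nout a = Some sd.
Proof. by move=> [s [t [-> [-> H]]]] /negbTE A; rewrite A in H; case: H => -> ->. Qed.

Lemma peak_shape_of_links c a c' : link n c a -> link n a c' ->
  lev (vtx a) = n -> turn_ok n a -> peak_shape a.
Proof.
move=> [s [_ [Es Ss]]] [t [Et [_ St]]] La; rewrite /turn_ok Es Et => -[_ /(_ La) Hbd].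
exists s, t; do !split => //; have [Us Dt] := allowed_bd_updown Hbd.
have := step_lev Ss; rewrite Us => -[_ Lca].
case: s Ss Us Hbd {Es} => // -[_ [_ [Ac _]]] _ Hbd; rewrite (alice_at_succ Lca) Ac /=;
  by case: t Hbd {Et St Dt} => // _; do ?split; by [left | right].
Qed.

(* [r] is the unprocessed rest of the old walk and [prev] the visit before it. *)
Record pending (prev : node) (r : seq node) : Prop := {
  pending_chain : chain (link n) prev r;
  pending_nodes : forall a, In a r -> node_ok n (payoff1 x) a;
  pending_peaks : forall a, In a r -> lev (vtx a) = n -> peak_shape a;
  pending_ordered : ForallOrdPairs visits_ordered r;
  pending_last : r <> [::] -> lev (vtx (last prev r)) < n }.

Lemma pending_suffix prev s r : pending prev (s ++ r) -> pending (last prev s) r.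
Proof.
case=> Hch Hok Hpk Hord Hl; have Hin a : In a r -> In a (s ++ r) by move=> Ha; apply/In_cat; right.
split.
- by move/chain_cat: Hch => [].
- by move=> a /Hin; exact: Hok.
- by move=> a /Hin; exact: Hpk.
- by elim: s Hord {Hch Hok Hpk Hl Hin} => // a s IH /= /ForallOrdPairs_consE[_ /IH].
- by move=> Hr; rewrite -last_cat; apply: Hl; case: s {Hch Hok Hpk Hord Hin}.
Qed.

Lemma pending_peak_once prev s1 a s2 : pending prev (s1 ++ a :: s2) ->
  lev (vtx a) = n -> ~ visited (s1 ++ s2) (vtx a).
Proof.
case=> _ _ Hpk Hord _ La; have [H1 H2] := ForallOrdPairs_mid Hord.
have cls b : In b (s1 ++ a :: s2) -> vtx b = vtx a -> node_class b = 3.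
  by move=> Hb Eb; apply/peak_shape_class/Hpk; rewrite ?Eb.
have Ca : node_class a = 3 by apply: cls => //; apply/In_cat; right; left.
case/visited_cat=> [[b Hb Eb] | [b Hb Eb]].
- have Cb : node_class b = 3 by apply: cls => //; apply/In_cat; left.
  by have := H1 b Hb Eb; rewrite Cb Ca.
- have Cb : node_class b = 3 by apply: cls => //; apply/In_cat; right; right.
  by have := H2 b Hb (esym Eb); rewrite Cb Ca.
Qed.

Lemma pending_head prev a r : pending prev (a :: r) -> lev (vtx a) = n ->
  [/\ in_product (vtx a), alice_forces1 x (vtx a), peak_shape a, ~ visited r (vtx a)
    & forall o, link n.+1 prev (nin a, vtx a, o)].
Proof.
move=> P La; have Ha : In a (a :: r) by left.
have [_ [Pa [_ Fa]]] := pending_nodes P Ha.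
split => //.
- by apply/negbFE; exact: Fa.
- exact: (pending_peaks P Ha La).
- exact: (@pending_peak_once prev [::] a r).
- have [[t [Et [Et' St]]] _] := chain_cons_inv (pending_chain P).
  by move=> o; exists t; do !split => //; exact: step_mono.
Qed.

Definition peak_or_child (r : seq node) (y : vertex) : Prop :=
  exists2 u, visited r u & lev u = n /\ (y = u \/ move_to u y).

Lemma peak_or_child_lev r y : peak_or_child r y -> n <= lev y.
Proof. by case=> u _ [Lu [-> | /lev_move_to ->]]; rewrite Lu. Qed.

Lemma peak_or_child_peak r y : lev y = n -> ~ visited r y -> ~ peak_or_child r y.
Proof.
move=> Ly Hy [u Hu [Lu [Eu | /lev_move_to]]]; first by apply: Hy; rewrite Eu.
by rewrite Ly Lu; lia.
Qed.

Lemma peak_or_child_top r y : lev y = n.+1 ->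
  (forall u, visited r u -> lev u = n -> ~ move_to u y) -> ~ peak_or_child r y.
Proof.
move=> Ly Hy [u Hu [Lu [Eu | M]]]; last exact: Hy Hu Lu M.
by move: Ly; rewrite Eu Lu; lia.
Qed.

Lemma peak_or_child_suffix a e r pre cont y :
  a :: r = pre ++ e :: cont -> peak_or_child cont y -> peak_or_child (a :: r) y.
Proof.
move=> E [u Hu Pu]; exists u => //; apply/visited_cons; right.
exact: visited_suffix E Hu.
Qed.

(* From the Bob peak [e], climb to its Two-child; if that is the One-child of
   a later peak [e'], descend to [e'] and repeat from there, else return to [e]. *)
Inductive zigzag : node -> seq node -> seq node -> seq node -> Prop :=
| zigzag_hop e r pre e' post Z cont :
    r = pre ++ e' :: post -> moveB (vtx e') One = moveB (vtx e) Two ->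
    zigzag e' post Z cont ->
    zigzag e r ((Some lu, moveB (vtx e) Two, Some ld) :: (Some ld, vtx e', Some lu) :: Z) cont
| zigzag_stop e r :
    (forall a, In a r -> moveB (vtx a) One <> moveB (vtx e) Two) ->
    zigzag e r [:: (Some lu, moveB (vtx e) Two, Some rd); (Some rd, vtx e, nout e)] r.

(* The detour replacing the visit [a] of a peak: climb to a child with [x = 0]
   and descend to a later peak below it, if any, else back to [a]. *)
Inductive gadget : node -> seq node -> seq node -> seq node -> Prop :=
| gadgetA_jump a k r pre e post :
    alice_at (vtx a) -> x (moveA (vtx a) k) = false -> r = pre ++ e :: post ->
    (exists k', moveA (vtx e) k' = moveA (vtx a) k) ->
    gadget a r [:: (nin a, vtx a, Some su); (Some su, moveA (vtx a) k, Some sd);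
                   (Some sd, vtx e, nout e)] post
| gadgetA_stay a k r :
    alice_at (vtx a) -> x (moveA (vtx a) k) = false ->
    (forall e, In e r -> ~ exists k', moveA (vtx e) k' = moveA (vtx a) k) ->
    gadget a r [:: (nin a, vtx a, Some su); (Some su, moveA (vtx a) k, Some sd);
                   (Some sd, vtx a, nout a)] r
| gadgetB_jump a r pre e post :
    ~~ alice_at (vtx a) -> r = pre ++ e :: post -> moveB (vtx e) Two = moveB (vtx a) One ->
    gadget a r [:: (nin a, vtx a, Some ru); (Some ru, moveB (vtx a) One, Some rd);
                   (Some rd, vtx e, nout e)] post
| gadgetB_zigzag a r Z cont :
    ~~ alice_at (vtx a) -> (forall e, In e r -> moveB (vtx e) Two <> moveB (vtx a) One) ->
    zigzag a r Z cont ->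
    gadget a r ((nin a, vtx a, Some ru) :: (Some ru, moveB (vtx a) One, Some ld)
                :: (Some ld, vtx a, Some lu) :: Z) cont.

(* Each peak visit is replaced by its gadget, which skips the old visits up to
   the peak where it comes down. *)
Inductive expand : seq node -> seq node -> Prop :=
| expand_nil : expand [::] [::]
| expand_keep a r W : lev (vtx a) < n -> expand r W -> expand (a :: r) (a :: W)
| expand_detour a r g cont W : lev (vtx a) = n -> gadget a r g cont -> expand cont W ->
    expand (a :: r) (g ++ W).

Lemma zigzag_cont e r Z cont : zigzag e r Z cont ->
  exists pre f, e :: r = pre ++ f :: cont.
Proof.
elim=> {e r Z cont} [e r pre e' post Z cont -> _ _ [pre' [f E]] | e r _].
- by exists (e :: pre ++ pre'), f; rewrite /= E catA.
- by exists [::], e.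
Qed.

Lemma gadget_cont a r g cont : gadget a r g cont ->
  exists pre e, a :: r = pre ++ e :: cont.
Proof.
case=> [b k {}r pre e post _ _ -> _ | b k {}r _ _ _ | b {}r pre e post _ -> _
       | b {}r Z {}cont _ _ /zigzag_cont //].
- by exists (b :: pre), e.
- by exists [::], b.
- by exists (b :: pre), e.
Qed.

Lemma zigzag_exists e r : exists Z cont, zigzag e r Z cont.
Proof.
have [m Hm] := ubnP (size r); elim: m e r Hm => // m IH e r Hm.
case: (classic (exists2 a, In a r & moveB (vtx a) One = moveB (vtx e) Two)) => [[a Ha E] | H].
- have [pre [post Er]] := in_split _ _ Ha.
  have [|Z [cont HZ]] := IH a post; first by move: Hm; rewrite Er size_cat /=; lia.
  by exists ((Some lu, moveB (vtx e) Two, Some ld) :: (Some ld, vtx a, Some lu) :: Z), cont;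
    apply: zigzag_hop Er E HZ.
- by do 2!eexists; apply: zigzag_stop => a Ha E; apply: H; exists a.
Qed.

Lemma gadget_exists a r : alice_forces1 x (vtx a) -> exists g cont, gadget a r g cont.
Proof.
rewrite /alice_forces1; case A: (alice_at (vtx a)) => Hw.
- have [k Hk] : exists k, x (moveA (vtx a) k) = false.
    by case/orP: Hw => /negPf H; eexists; exact: H.
  case: (classic (exists2 e, In e r & exists k', moveA (vtx e) k' = moveA (vtx a) k))
    => [[e He E] | H].
  + have [pre [post Er]] := in_split _ _ He.
    by do 2!eexists; apply: gadgetA_jump Er E; rewrite ?A.
  + by do 2!eexists; apply: gadgetA_stay Hk _ => [|e He E]; [rewrite A | apply: H; exists e].
- case: (classic (exists2 e, In e r & moveB (vtx e) Two = moveB (vtx a) One)) => [[e He E] | H].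
  + have [pre [post Er]] := in_split _ _ He.
    by do 2!eexists; apply: gadgetB_jump Er E; rewrite A.
  + have [Z [cont HZ]] := zigzag_exists a r.
    by do 2!eexists; apply: gadgetB_zigzag HZ => [|e He E]; [rewrite A | apply: H; exists e].
Qed.

Lemma expand_exists r :
  (forall a, In a r -> lev (vtx a) <= n /\ (lev (vtx a) = n -> alice_forces1 x (vtx a))) ->
  exists W, expand r W.
Proof.
have [m Hm] := ubnP (size r); elim: m r Hm => // m IH [|a r] Hm Hr.
  by exists [::]; constructor.
have Hr' b : In b r -> lev (vtx b) <= n /\ (lev (vtx b) = n -> alice_forces1 x (vtx b)).
  by move=> Hb; apply: Hr; right.
have [La Fa] := Hr a (or_introl erefl).
case: (ltngtP (lev (vtx a)) n) La => // [Lt | Eq] _.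
- by have [W HW] := IH r Hm Hr'; exists (a :: W); constructor.
- have [g [cont HG]] := gadget_exists r (Fa Eq).
  have [pre [e Ee]] := gadget_cont HG.
  have Hc : size cont < m by move: Hm (congr1 size Ee) => /=; rewrite size_cat /=; lia.
  have [W HW] := IH cont Hc (fun b Hb => Hr' b (In_suffix Ee Hb)).
  by exists (g ++ W); apply: expand_detour HG HW.
Qed.

Lemma move_to_lev u w v : lev u = lev w -> move_to u v ->
  (alice_at w /\ exists k, v = moveA u k) \/ (~~ alice_at w /\ exists k, v = moveB u k).
Proof. by rewrite /move_to => /alice_at_lev ->. Qed.

Lemma child_fresh r v c : lev v = n -> lev c = n.+1 ->
  (if alice_at v then forall u k, visited r u -> c <> moveA u k
   else forall u k, visited r u -> c <> moveB u k) -> ~ peak_or_child r c.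
Proof.
move=> Lv Lc H; apply: peak_or_child_top => // u Hu Lu M.
have Luv : lev u = lev v by rewrite Lu Lv.
by case: (move_to_lev Luv M) => -[Av [k E]]; move: H; rewrite ?Av ?(negbTE Av) => /(_ u k Hu).
Qed.

Record zigzag_spec (e : node) (r Z cont : seq node) : Prop := {
  zigzag_end : exists2 f, (exists pre, e :: r = pre ++ f :: cont) &
    [/\ lev (vtx f) = n, Z <> [::] & last e Z = (Some rd, vtx f, nout f)];
  zigzag_chain : chain (link n.+1) (Some ld, vtx e, Some lu) Z;
  zigzag_nodes : forall a, In a Z -> node_ok n.+1 x a;
  zigzag_where : forall a, In a Z -> exists2 y, visited (e :: r) y &
    lev y = n /\ (vtx a = y \/ vtx a = moveB y Two);
  zigzag_ordered : ForallOrdPairs visits_ordered Z;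
  zigzag_fresh : forall a, In a Z -> ~ peak_or_child cont (vtx a);
  zigzag_back : forall a, In a Z -> vtx a = vtx e -> node_class a = 2 }.

Lemma bob_peak_Two prev e r : pending prev (e :: r) -> lev (vtx e) = n ->
  ~~ alice_at (vtx e) -> let d := moveB (vtx e) Two in
  [/\ lev d = n.+1, node_ok n.+1 x (Some lu, d, Some ld), node_ok n.+1 x (Some lu, d, Some rd)
    & moveB_edge n.+1 Two (vtx e) d].
Proof.
move=> P Le Ae d; have [Pe Fe _ _ _] := pending_head P Le.
have Ld : lev d = n.+1 by rewrite lev_moveB Le.
have Pd : in_product d by exact: in_product_moveB.
have xd : x d = false by move: Fe; rewrite /alice_forces1 (negbTE Ae) => /andP[_ /negPf].
by split => //; [apply: node_ok_top | apply: node_ok_top | do !split; rewrite ?Le].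
Qed.

Lemma zigzag_stop_spec prev e r : pending prev (e :: r) -> lev (vtx e) = n ->
  ~~ alice_at (vtx e) -> (forall a, In a r -> moveB (vtx a) One <> moveB (vtx e) Two) ->
  zigzag_spec e r [:: (Some lu, moveB (vtx e) Two, Some rd); (Some rd, vtx e, nout e)] r.
Proof.
move=> P Le Ae Hno.
have [Pe _ Se Ne _] := pending_head P Le; have [_ Et] := bob_peak_shape Se Ae.
have [Ld _ Okd Sd] := bob_peak_Two P Le Ae.
split.
- by exists e; [exists [::] | split].
- by apply: chain_cons; [exists lu | apply: chain_cons; [exists rd | constructor]].
- by move=> a [<- | [<- | []]] //; apply: node_ok_below; rewrite /= ?Et ?Le.
- move=> a [<- | [<- | []]]; exists (vtx e); by [apply/visited_cons; left | split => //; tauto].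
- by repeat constructor; apply: visits_ordered_lev; rewrite /= Ld Le; lia.
- move=> a [<- | [<- | []]]; last exact: peak_or_child_peak.
  apply: (child_fresh Le Ld); rewrite (negbTE Ae) => u [] [b Hb <-] Eb.
  + exact: (Hno b Hb).
  + by apply: Ne; exists b; rewrite // (moveB_inj Eb).
- move=> a [<- | [<- | []]] Ea; last by rewrite /node_class /= Et.
  by have := congr1 lev Ea; rewrite /= Ld Le; lia.
Qed.

Lemma zigzag_hop_next prev e r pre e' post :
  pending prev (e :: r) -> lev (vtx e) = n -> ~~ alice_at (vtx e) ->
  r = pre ++ e' :: post -> moveB (vtx e') One = moveB (vtx e) Two ->
  [/\ lev (vtx e') = n, ~~ alice_at (vtx e') & pending (last prev (e :: pre)) (e' :: post)].
Proof.
move=> P Le Ae Er E.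
have Le' : lev (vtx e') = n by move: (congr1 lev E); rewrite !lev_moveB Le => -[].
split => //; first by rewrite (@alice_at_lev _ (vtx e)) // Le' Le.
by apply: (@pending_suffix prev (e :: pre)); rewrite /= -Er.
Qed.

Lemma zigzag_hop_spec prev e r pre e' post Z cont :
  pending prev (e :: r) -> lev (vtx e) = n -> ~~ alice_at (vtx e) ->
  r = pre ++ e' :: post -> moveB (vtx e') One = moveB (vtx e) Two -> zigzag e' post Z cont ->
  zigzag_spec e' post Z cont ->
  zigzag_spec e r ((Some lu, moveB (vtx e) Two, Some ld) :: (Some ld, vtx e', Some lu) :: Z) cont.
Proof.
move=> P Le Ae Er E HZ [[f [pre' Ef] [Lf Zne Zl]] Zch Zok Zw Zord Zfr Zbk].
have [_ _ _ Ne _] := pending_head P Le.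
have [Ld Okd _ Sd] := bob_peak_Two P Le Ae.
have [Le' Ae' P'] := zigzag_hop_next P Le Ae Er E.
have [Pe' _ _ Ne' _] := pending_head P' Le'.
have Sub u : visited (e' :: post) u -> visited r u.
  by rewrite Er => Hu; apply/visited_cat; right.
have He' : In e' r by rewrite Er; apply/In_cat; right; left.
have Ee' : vtx e' <> vtx e by move=> E'; apply: Ne; rewrite -E'; exists e'.
split.
- exists f; first by exists (e :: pre ++ pre'); rewrite Er /= -catA Ef.
  by split => //=; rewrite -Zl; exact: last_default.
- apply: chain_cons; first by exists lu.
  apply: chain_cons; last exact: Zch.
  by exists ld; do !split => //; rewrite ?Le' // E.
- move=> a [<- | [<- | Ha]] //; last exact: Zok.
  by apply: node_ok_below; rewrite ?Le'.
- move=> a [<- | [<- | /Zw [y Hy Py]]].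
  + by exists (vtx e); [apply/visited_cons; left | split => //; right].
  + by exists (vtx e'); [apply/visited_cons; right; exists e' | split => //; left].
  + by exists y => //; apply/visited_cons; right; exact: Sub.
- apply/ForallOrdPairs_consE; split.
    move=> b [<- | Hb]; first by apply: visits_ordered_lev; rewrite Ld Le'; lia.
    have [y Hy [Ly [Eb | Eb]]] := Zw b Hb.
      by apply: visits_ordered_lev; rewrite Ld Eb Ly; lia.
    rewrite /visits_ordered /= => Edb; exfalso; apply: Ne; apply: Sub.
    by have /moveB_inj -> : moveB (vtx e) Two = moveB y Two by rewrite -Eb.
  apply/ForallOrdPairs_consE; split => // b Hb Eb.
  by rewrite (Zbk b Hb (esym Eb)).
- have [pz [fz Ez]] := zigzag_cont HZ.
  have Nc : ~ visited cont (vtx e').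
    by move=> /(visited_suffix Ez); apply: Ne'.
  move=> a [<- | [<- | Ha]]; last exact: Zfr.
  + apply: (child_fresh Le Ld); rewrite (negbTE Ae) => u [] Hu Ed.
    * by apply: Nc; have -> : vtx e' = u by apply: (@moveB_inj _ _ One); rewrite E Ed.
    * apply: Ne; rewrite (moveB_inj Ed); apply/Sub/visited_cons; right.
      exact: visited_suffix Ez Hu.
  + exact: peak_or_child_peak.
- move=> a [<- | [<- | Ha]] Ea.
  + by have := congr1 lev Ea; rewrite /= Ld Le; lia.
  + by case: Ee'.
  + have [y Hy [Ly [Eay | Eay]]] := Zw a Ha.
      by case: Ne; rewrite -Ea Eay; apply: Sub.
    by have := congr1 lev Eay; rewrite Ea Le lev_moveB Ly; lia.
Qed.

Lemma zigzag_sound prev e r Z cont : zigzag e r Z cont -> pending prev (e :: r) ->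
  lev (vtx e) = n -> ~~ alice_at (vtx e) -> zigzag_spec e r Z cont.
Proof.
move=> HZ; elim: HZ prev => {e r Z cont} [e r pre e' post Z cont Er E HZ IH | e r Hno] prev P Le Ae.
- have [Le' Ae' P'] := zigzag_hop_next P Le Ae Er E.
  exact: zigzag_hop_spec P Le Ae Er E HZ (IH _ P' Le' Ae').
- exact: zigzag_stop_spec P Le Ae Hno.
Qed.

Record gadget_spec (prev a : node) (r g cont : seq node) : Prop := {
  gadget_end : exists2 e, (exists pre, a :: r = pre ++ e :: cont) &
    [/\ lev (vtx e) = n, g <> [::], vtx (last a g) = vtx e & nout (last a g) = nout e];
  gadget_chain : chain (link n.+1) prev g;
  gadget_nodes : forall b, In b g -> node_ok n.+1 x b;
  gadget_where : forall b, In b g -> peak_or_child (a :: r) (vtx b);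
  gadget_ordered : ForallOrdPairs visits_ordered g;
  gadget_fresh : forall b, In b g -> ~ peak_or_child cont (vtx b) }.

Lemma detour_spec prev a r pre e cont s t c :
  pending prev (a :: r) -> lev (vtx a) = n ->
  a :: r = pre ++ e :: cont -> lev (vtx e) = n ->
  step n.+1 (vtx a) c s -> step n.+1 c (vtx e) t -> allowed_bd s t -> x c = false ->
  (if nin a is Some s0 then allowed_int s0 s else true) ->
  (if nout e is Some t0 then allowed_int t t0 else true) ->
  ~ peak_or_child cont c ->
  gadget_spec prev a r
    [:: (nin a, vtx a, Some s); (Some s, c, Some t); (Some t, vtx e, nout e)] cont.
Proof.
move=> P La Ee Le Sac Sce Hst xc Hs Ht Hc.
have [Pa _ Sa Na Lprev] := pending_head P La.
have [Us Dt] := allowed_bd_updown Hst.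
have Lc : lev c = n.+1 by have := step_lev Sac; rewrite Us La => -[].
have [_ Pc] := step_in_product Sac.
have He : In e (a :: r) by rewrite Ee; apply/In_cat; right; left.
have [_ [Pe _]] := pending_nodes P He.
have Se := pending_peaks P He Le.
have Ne : ~ visited cont (vtx e).
  have P' : pending prev (pre ++ e :: cont) by rewrite -Ee.
  by move=> Hv; apply: (pending_peak_once P' Le); apply/visited_cat; right.
have Nac : ~ visited cont (vtx a) by move/(visited_suffix Ee).
split.
- by exists e; [exists pre | split].
- apply: chain_cons; first exact: Lprev.
  by apply: chain_cons; [exists s | apply: chain_cons; [exists t | constructor]].
- move=> b [<- | [<- | [<- | []]]].
  + by apply: node_ok_below; rewrite ?La.
  + exact: node_ok_top.
  + by apply: node_ok_below; rewrite ?Le.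
- move=> b [<- | [<- | [<- | []]]].
  + by exists (vtx a); [apply/visited_cons; left | split => //; left].
  + exists (vtx a); first by apply/visited_cons; left.
    by split => //; right; exact: step_up_move_to Sac Us.
  + by exists (vtx e); [exists e | split => //; left].
- have [s0 [t0 [Es0 [_ [Us0 _]]]]] := peak_shape_updown Sa.
  have [s1 [t1 [_ [Et1 [_ Dt1]]]]] := peak_shape_updown Se.
  repeat constructor; try (by apply: visits_ordered_lev; rewrite /= ?Lc ?La ?Le; lia).
  by move=> _; rewrite /node_class /= Es0 Et1 /= Us0 Us (negbTE Dt) (negbTE Dt1).
- move=> b [<- | [<- | [<- | []]]].
  + exact: peak_or_child_peak.
  + exact: Hc.
  + exact: peak_or_child_peak.
Qed.

Lemma moveA_three_parents u1 u2 u3 k1 k2 k3 :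
  moveA u1 k1 = moveA u2 k2 -> moveA u1 k1 = moveA u3 k3 -> u1 = u2 \/ u1 = u3 \/ u2 = u3.
Proof.
move=> E2 E3; case: k1 E2 E3; case: k2; case: k3 => E2 E3;
  first [ left; exact: moveA_inj E2 | right; left; exact: moveA_inj E3
        | right; right; apply: (@moveA_inj _ _ One); by rewrite -E2 E3
        | right; right; apply: (@moveA_inj _ _ Two); by rewrite -E2 E3 ].
Qed.

Lemma peak_allowed_in a s : peak_shape a -> nin a = Some s ->
  (if alice_at (vtx a) then allowed_int s su else allowed_int s ru).
Proof. by move=> [s0 [t0 [-> [_ H]]]] [<-]; case: alice_at H => [[[->|->] _] | [-> _]]. Qed.

Lemma peak_allowed_out a t : peak_shape a -> nout a = Some t ->
  (if alice_at (vtx a) then allowed_int sd t else allowed_int rd t).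
Proof. by move=> [s0 [t0 [_ [-> H]]]] [<-]; case: alice_at H => [[_ [->|->]] | [_ ->]]. Qed.

Lemma gadgetA_spec prev a k r pre e cont : pending prev (a :: r) -> lev (vtx a) = n ->
  alice_at (vtx a) -> x (moveA (vtx a) k) = false ->
  a :: r = pre ++ e :: cont -> (exists k', moveA (vtx e) k' = moveA (vtx a) k) ->
  (forall u k', visited cont u -> moveA (vtx a) k <> moveA u k') ->
  gadget_spec prev a r [:: (nin a, vtx a, Some su); (Some su, moveA (vtx a) k, Some sd);
                          (Some sd, vtx e, nout e)] cont.
Proof.
move=> P La A xc Ee [k' Ek] Hc.
have He : In e (a :: r) by rewrite Ee; apply/In_cat; right; left.
have Le : lev (vtx e) = n by move: (congr1 lev Ek); rewrite !lev_moveA La => -[].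
have Ae : alice_at (vtx e) by rewrite (alice_at_lev (w := vtx a)) ?Le.
have [Pa _ Sa _ _] := pending_head P La.
have [_ [Pe _]] := pending_nodes P He.
apply: (detour_spec P La Ee Le) => //.
- by apply: moveA_edge_intro; rewrite ?La.
- by do !split; rewrite ?Le //; exists k'.
- by case E: (nin a) => [s|] //; move: (peak_allowed_in Sa E); rewrite A.
- by case E: (nout e) => [t|] //; move: (peak_allowed_out (pending_peaks P He Le) E); rewrite Ae.
- by apply: (child_fresh La); rewrite ?lev_moveA ?La ?A.
Qed.

Lemma bob_peak_One prev a r : pending prev (a :: r) -> lev (vtx a) = n -> ~~ alice_at (vtx a) ->
  [/\ lev (moveB (vtx a) One) = n.+1, x (moveB (vtx a) One) = false,
      in_product (moveB (vtx a) One) & moveB_edge n.+1 One (vtx a) (moveB (vtx a) One)].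
Proof.
move=> P La Aa; have [Pa Fa _ _ _] := pending_head P La.
split; first by rewrite lev_moveB La.
- by move: Fa; rewrite /alice_forces1 (negbTE Aa) => /andP[/negPf].
- exact: in_product_moveB.
- by do !split; rewrite ?La.
Qed.

Lemma gadgetB_jump_spec prev a r pre e post :
  pending prev (a :: r) -> lev (vtx a) = n -> ~~ alice_at (vtx a) ->
  r = pre ++ e :: post -> moveB (vtx e) Two = moveB (vtx a) One ->
  gadget_spec prev a r [:: (nin a, vtx a, Some ru); (Some ru, moveB (vtx a) One, Some rd);
                          (Some rd, vtx e, nout e)] post.
Proof.
move=> P La Aa Er E; have [Lc xc Pc Sac] := bob_peak_One P La Aa.
have Ee : a :: r = (a :: pre) ++ e :: post by rewrite Er.
have He : In e (a :: r) by rewrite Ee; apply/In_cat; right; left.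
have Le : lev (vtx e) = n by move: Lc; rewrite -E lev_moveB => -[].
have Ae : ~~ alice_at (vtx e) by rewrite (alice_at_lev (w := vtx a)) ?Le.
have [Pa _ Sa Na _] := pending_head P La.
have [_ [Pe _]] := pending_nodes P He.
have P' : pending prev ((a :: pre) ++ e :: post) by rewrite -Ee.
have Ne := pending_peak_once P' Le.
apply: (detour_spec P La Ee Le) => //.
- by do !split; rewrite ?Le.
- by case Es: (nin a) => [s|] //; move: (peak_allowed_in Sa Es); rewrite (negbTE Aa).
- case Et: (nout e) => [t|] //.
  by move: (peak_allowed_out (pending_peaks P He Le) Et); rewrite (negbTE Ae).
- apply: (child_fresh La Lc); rewrite (negbTE Aa) => u [] Hu Eu.
  + by apply: Na; rewrite (moveB_inj Eu) Er; apply/visited_cat; right; apply/visited_cons; right.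
  + apply: Ne; have -> : vtx e = u by apply: (@moveB_inj _ _ Two); rewrite E Eu.
    by apply/visited_cat; right.
Qed.

Lemma zigzag_where_peak_or_child e r Z cont : zigzag_spec e r Z cont ->
  lev (vtx e) = n -> ~~ alice_at (vtx e) -> forall b, In b Z -> peak_or_child (e :: r) (vtx b).
Proof.
move=> [_ _ _ Zw _ _ _] Le Ae b /Zw [y Hy [Ly [Eb | Eb]]]; exists y => //; split => //.
  by left.
by right; right; split; [rewrite (alice_at_lev (w := vtx e)) ?Ly ?Le | exists Two].
Qed.

Lemma zigzag_avoids_One e r Z cont : zigzag_spec e r Z cont -> lev (vtx e) = n ->
  (forall e', In e' r -> moveB (vtx e') Two <> moveB (vtx e) One) ->
  forall b, In b Z -> vtx b <> moveB (vtx e) One.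
Proof.
move=> [_ _ _ Zw _ _ _] Le Hno b Hb Eb.
have [y /visited_cons[Ey | [e' He' Ey]] [Ly [Eby | Eby]]] := Zw b Hb.
- by move: (congr1 lev Eb); rewrite Eby Ly lev_moveB Le; lia.
- by apply: (@moveB_One_Two (vtx e)); rewrite -Eb Eby Ey.
- by move: (congr1 lev Eb); rewrite Eby Ly lev_moveB Le; lia.
- by apply: (Hno e' He'); rewrite Ey -Eby.
Qed.

Lemma gadgetB_zigzag_spec prev a r Z cont :
  pending prev (a :: r) -> lev (vtx a) = n -> ~~ alice_at (vtx a) ->
  (forall e, In e r -> moveB (vtx e) Two <> moveB (vtx a) One) -> zigzag a r Z cont ->
  gadget_spec prev a r ((nin a, vtx a, Some ru) :: (Some ru, moveB (vtx a) One, Some ld)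
                        :: (Some ld, vtx a, Some lu) :: Z) cont.
Proof.
move=> P La Aa Hno HZ; have [Lc xc Pc Sac] := bob_peak_One P La Aa.
have [Pa _ Sa Na Lprev] := pending_head P La; have [Es _] := bob_peak_shape Sa Aa.
have S := zigzag_sound HZ P La Aa.
have Zw := zigzag_where_peak_or_child S La Aa; have Zc := zigzag_avoids_One S La Hno.
have [[f [pre Ef] [Lf Zne Zl]] Zch Zok _ Zord Zfr Zbk] := S.
have Nac : ~ visited cont (vtx a) by move/(visited_suffix Ef).
split.
- exists f; first by exists pre.
  by rewrite /= (last_default _ a Zne) Zl.
- apply: chain_cons; first exact: Lprev.
  by apply: chain_cons; [exists ru | apply: chain_cons; [exists ld | exact: Zch]].
- move=> b [<- | [<- | [<- | /Zok //]]].
  + by apply: node_ok_below; rewrite /= ?La ?Es.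
  + exact: node_ok_top.
  + by apply: node_ok_below; rewrite /= ?La.
- move=> b [<- | [<- | [<- | /Zw //]]]; exists (vtx a); try by apply/visited_cons; left.
  + by split => //; left.
  + by split => //; right; right; split => //; exists One.
  + by split => //; left.
- have cls b : In b Z -> vtx b = vtx a -> node_class b = 2 by move=> Hb /Zbk ->.
  apply/ForallOrdPairs_consE; split.
    move=> b [<- | [<- | Hb]]; first by apply: visits_ordered_lev; rewrite Lc La; lia.
    + by rewrite /visits_ordered /node_class /= Es.
    + by move=> /= /esym /(cls _ Hb) ->; rewrite /node_class /= Es.
  apply/ForallOrdPairs_consE; split.
    move=> b [<- | Hb]; first by apply: visits_ordered_lev; rewrite Lc La; lia.
    by move=> /esym /(Zc _ Hb).
  apply/ForallOrdPairs_consE; split => // b Hb.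
  by move=> /esym /(cls _ Hb) ->.
- move=> b [<- | [<- | [<- | /Zfr //]]]; try exact: peak_or_child_peak.
  apply: (child_fresh La Lc); rewrite (negbTE Aa) => u [] Hu Eu.
  + by apply: Nac; rewrite (moveB_inj Eu).
  + by case: (visited_suffix Ef Hu) => e He Ee; apply: (Hno e He); rewrite Ee -Eu.
Qed.

Lemma gadget_sound prev a r g cont : gadget a r g cont -> pending prev (a :: r) ->
  lev (vtx a) = n -> gadget_spec prev a r g cont.
Proof.
case=> {a r g cont} [a k r pre e post A xc Er Ek | a k r A xc Hno | a r pre e post A Er E
       | a r Z cont A Hno HZ] P La.
- have Ee : a :: r = (a :: pre) ++ e :: post by rewrite Er.
  apply: (gadgetA_spec P La A xc Ee Ek) => u k'' Hu Eu.
  have [_ _ _ Na _] := pending_head P La.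
  have P' : pending prev ((a :: pre) ++ e :: post) by rewrite -Ee.
  case: Ek => k' Ek.
  have Le : lev (vtx e) = n by move: (congr1 lev Ek); rewrite !lev_moveA La => -[].
  have Ne := pending_peak_once P' Le.
  case: (moveA_three_parents Eu (esym Ek)) => [Eau | [Eae | Eue]].
  + by apply: Na; rewrite Eau Er; apply/visited_cat; right; apply/visited_cons; right.
  + by apply: Na; exists e; rewrite ?Eae // Er; apply/In_cat; right; left.
  + by apply: Ne; rewrite -Eue; apply/visited_cat; right.
- apply: (gadgetA_spec (pre := [::]) P La A xc erefl) => [|u k'' [e He <-] Eu].
    by exists k.
  by apply: (Hno e He); exists k''.
- exact: (gadgetB_jump_spec P La A Er E).
- exact: (gadgetB_zigzag_spec P La A Hno HZ).
Qed.

Lemma pending_after prev s e r : pending prev (s ++ e :: r) -> pending e r.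
Proof. by rewrite -cat_rcons => /pending_suffix; rewrite last_rcons. Qed.

Lemma node_ok_low y a : lev (vtx a) < n -> node_ok n y a -> node_ok n.+1 x a.
Proof.
move=> La [Ha [Pa _]]; apply: node_ok_below => //; first exact: ltnW.
move: Ha; rewrite /turn_ok; case: (nin a) => [s|] //; case: (nout a) => [t|] //.
by case=> /(_ La).
Qed.

Record expand_spec (prev : node) (r W : seq node) : Prop := {
  expand_chain : chain (link n.+1) prev W;
  expand_nonempty : r <> [::] -> W <> [::];
  expand_last : last prev W = last prev r;
  expand_nodes : forall a, In a W -> node_ok n.+1 x a;
  expand_low : forall a, In a W -> lev (vtx a) < n -> In a r;
  expand_high : forall a, In a W -> n <= lev (vtx a) -> peak_or_child r (vtx a);
  expand_ordered : ForallOrdPairs visits_ordered W }.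

Lemma visits_ordered_low a r W : lev (vtx a) < n -> ForallOrdPairs visits_ordered (a :: r) ->
  (forall b, In b W -> lev (vtx b) < n -> In b r) -> forall b, In b W -> visits_ordered a b.
Proof.
move=> La /ForallOrdPairs_consE[Pr _] lo b Hb.
case: (ltnP (lev (vtx b)) n) => [/(lo _ Hb) /Pr // | Lb].
by apply: visits_ordered_lev => E; move: Lb; rewrite -E leqNgt La.
Qed.

Lemma expand_keep_spec prev a r W : pending prev (a :: r) -> lev (vtx a) < n ->
  expand_spec a r W -> expand_spec prev (a :: r) (a :: W).
Proof.
move=> P La [ch _ lst ok lo hi ord].
have [[t [Et [Et' St]]] _] := chain_cons_inv (pending_chain P).
split => //.
- by apply: chain_cons ch; exists t; do !split => //; exact: step_mono.
- by move=> b [<- | /ok //]; exact: node_ok_low La (pending_nodes P (or_introl erefl)).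
- by move=> b [<- | Hb /(lo _ Hb)]; [left | right].
- move=> b [<- | Hb /(hi _ Hb) [u Hu Pu]]; first by rewrite leqNgt La.
  by exists u => //; apply/visited_cons; right.
- apply/ForallOrdPairs_consE; split => //.
  exact: visits_ordered_low La (pending_ordered P) lo.
Qed.

Lemma expand_detour_spec prev a r g cont W : pending prev (a :: r) -> lev (vtx a) = n ->
  gadget_spec prev a r g cont -> (forall prev', pending prev' cont -> expand_spec prev' cont W) ->
  expand_spec prev (a :: r) (g ++ W).
Proof.
move=> P La [[e [pre Ee] [Le gne vertex gout]] gch gok gw gord gfr] IH.
have P' : pending prev (pre ++ e :: cont) by rewrite -Ee.
have [ch ne lst ok lo hi ord] := IH e (pending_after P').
have cne : cont <> [::].
  have Ne : pre ++ e :: cont <> [::] by case: (pre) => [|? ?].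
  by move=> E0; have := pending_last P' Ne; rewrite last_cat /= E0 Le ltnn.
have gn b : In b g -> n <= lev (vtx b) by move/gw/peak_or_child_lev.
split.
- apply/chain_cat; split => //; rewrite (last_default prev a gne).
  by apply: chain_rehead ch => b [t [Et [Et' St]]]; exists t; rewrite gout vertex.
- by case: g gne {gch gok gw gord gfr gn vertex gout}.
- rewrite last_cat (last_default _ e (ne cne)) lst Ee last_cat /=.
  exact: last_default.
- by move=> b /In_cat[/gok | /ok].
- move=> b /In_cat[/gn Hb Lb | Hb /(lo _ Hb) Hc]; first by rewrite ltnNge Hb in Lb.
  by right; exact: In_suffix Ee Hc.
- move=> b /In_cat[/gw // | Hb /(hi _ Hb)]; exact: peak_or_child_suffix Ee.
- apply: ForallOrdPairs_cat => // b1 b2 Hb1 Hb2.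
  case: (ltnP (lev (vtx b2)) n) => [Lb2 | /(hi _ Hb2) H2].
    by apply: visits_ordered_lev => E; move: (gn _ Hb1); rewrite E leqNgt Lb2.
  by move=> E; case: (gfr _ Hb1); rewrite E.
Qed.

Lemma expand_sound prev r W : expand r W -> pending prev r -> expand_spec prev r W.
Proof.
move=> HW; elim: HW prev => {r W} [|a r W La HW IH | a r g cont W La HG HW IH] prev P.
- by split => //; constructor.
- exact: expand_keep_spec P La (IH a (pending_after (s := [::]) P)).
- exact: expand_detour_spec P La (gadget_sound HG P La) IH.
Qed.

Lemma toom_walk_lift t0 C : toom_walk n (payoff1 x) t0 C -> exists W, toom_walk n.+1 x t0 W.
Proof.
case=> Ht0 Hch [tl Hlast Htl] Hok Hord.
have Lo : lev origin < n by rewrite lev_origin.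
have Hok' a : In a C -> node_ok n (payoff1 x) a by move=> Ha; apply: Hok; right.
have P : pending (start t0) C.
  split => //.
  - move=> a Ha La; have [c Lca] := chain_pred Hch Ha.
    have [|c' Lac'] := chain_succ Hch Ha.
      by rewrite Hlast => Ea; move: Lo; rewrite -La Ea /= ltnn.
    by apply: peak_shape_of_links Lca Lac' La _; case: (Hok' a Ha).
  - by move/ForallOrdPairs_consE: Hord => [].
  - by rewrite Hlast.
have [W HW] : exists W, expand C W.
  apply: expand_exists => a /Hok'[_ [_ [La Fa]]]; split => // /Fa.
  by move/negbFE.
have [ch ne lst ok lo hi ord] := expand_sound HW P.
exists W; split => //.
- by exists tl; rewrite ?lst.
- by move=> a [<- | /ok //]; exact: node_ok_start.
- apply/ForallOrdPairs_consE; split => //.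
  exact: visits_ordered_low (Lo : lev (vtx (start t0)) < n) Hord lo.
Qed.

End Lift.

Lemma toom_walk_exists n x : 0 < n -> alice_forces x n origin ->
  exists t0 W, toom_walk n x t0 W.
Proof.
elim: n x => [|[|n] IH] // x _; first exact: toom_walk_base.
move/alice_forcesS/(IH _ isT) => [t0 [C HC]].
by have [W HW] := toom_walk_lift (ltn0Sn n) HC; exists t0, W.
Qed.

Theorem alice_wins_toom_present n x : 0 < n -> @alice_wins (G n) x -> @toom_present (G n) x.
Proof.
move=> n_gt0 /alice_wins_forces /(toom_walk_exists n_gt0) [t0 [W HW]].
exact: toom_walk_present HW.
Qed.

End LatticeProduct.

Theorem theorem10 (n : nat) (G : gspec) (hn : 1 <= n)
  (hG : G = game_G n Tree N2 Ltimes \/ G = game_G' n Tree N2 Rtimes \/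
        G = game_G n N2 N2 Ltimes \/ G = game_G' n N2 N2 Rtimes)
  (x : gvert G -> bool) :
  alice_wins x -> toom_present x.
Proof.
have tree_len (a : dvert Tree) k : dlen (dchild a k) = (dlen a).+1 := size_rcons a k.
have tree_inj (a a' : dvert Tree) k : dchild a k = dchild a' k -> a = a' := @rcons_injl _ k a a'.
have N2_len (a : dvert N2) k : dlen (dchild a k) = (dlen a).+1.
  by case: a k => i j [] /=; rewrite ?addSn ?addnS.
have N2_inj (a a' : dvert N2) k : dchild a k = dchild a' k -> a = a'.
  by case: a a' k => i j [i' j'] [] /= [-> ->].
by case: hG => [|[|[|]]] -> in x *; apply: alice_wins_toom_present => //;
  [left | right | left | right].
Qed.
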